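(* Let $L\subset L(p,1)$ be a framed oriented link with diagram $D$ as in the setup, and let $R(D)$ be its augmented fundamental rack with the presentation $[\{x_1,\dots,x_{m+d}\},\{a\}:\{\text{crossing relations},\ x_i^a=x_{m+i}\ (1\le i\le d)\},\{a^p\equiv x_d^{\epsilon_d}\cdots x_1^{\epsilon_1}\}]$ if $d>0$, resp. $[\{x_1,\dots,x_m\},\{a\}:\{\text{crossing relations}\},\{a^p\equiv1\}]$ if $d=0$. Define $A\colon R(D)\to R(D)$ by $A(x)=x^a$ and $F\colon R(D)\to R(D)$ by $F(x)=x\triangleright x_d^{\epsilon_d}\triangleright\cdots\triangleright x_1^{\epsilon_1}$ if $d>0$ and $F(x)=x$ if $d=0$. Then $A$ and $F$ are rack automorphisms of $R(D)$ (bijections satisfying $\phi(x\triangleright y)=\phi(x)\triangleright\phi(y)$), and $A^p=F$.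
   Context: A rack is a nonempty set with a binary operation $\triangleright$ such that (R1) for all $x,y$ there is a unique $z$ with $z\triangleright y=x$, and (R2) $(x\triangleright y)\triangleright z=(x\triangleright z)\triangleright(y\triangleright z)$. Write $t\triangleright\overline y$ for the unique $z$ with $z\triangleright y=t$, and $t\triangleright y^{1}=t\triangleright y$, $t\triangleright y^{-1}=t\triangleright\overline y$; iterated expressions $t\triangleright y_1\triangleright\cdots\triangleright y_r$ are parenthesized from the left. Racks given by presentations $[S_P,S_O:R_P,R_O]$ are quotients of the extended free rack $FR(S_P,S_O)$ (underlying set $S_P\times F(S_P\cup S_O)$, elements $s^w$, group $F(S_P\cup S_O)$ acting by right multiplication on exponents, $s^w\triangleright c^z=s^{wz^{-1}cz}$) by the smallest congruence identifying $x\sim y$ and $z\triangleright x\sim z\triangleright y$ for primary relations $x=y$, and $z^u\sim z^v$ for operator relations $u\equiv v$; the operator group acts on itself by conjugation. Setup: $L(p,1)$ is $p$-surgery on an unknot $U\subset S^3$ drawn with $p$ positive kinks; the diagram $D$ of $L\cup U$ has $d\ge 0$ strands of $L$ passing through the disk bounded by $U$, $m$ crossings with both strands in $L$, arcs of $L$ labelled $x_1,\dots,x_{m+d}$ where for $i\le d$ the arc $x_i$ becomes $x_{m+i}$ upon passing under the arc $a$ of $U$; $\epsilon_i\in\{\pm1\}$ is $1$ if $x_i$ follows $x_{m+i}$ in the orientation of $L$ and $-1$ otherwise; crossing relations are $x_i\triangleright x_j=x_l$ for over-arc $x_j$, under-arc $x_i$ on its right and $x_l$ on its left. *)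

From mathcomp Require Import all_boot.
Set Implicit Arguments. Unset Strict Implicit. Unset Printing Implicit Defensive.

(* Extended free rack FR(S_P, S_O) with S_P = {x_1,...,x_N} (0-based       *)
(* ordinals 'I_N: ordinal i stands for x_{i+1}) and S_O = {a}.             *)
(* A letter of the free group F(S_P u S_O) is (g, e) with g = Some i for   *)
(* x_{i+1}, g = None for a, and e = true for exponent +1, false for -1.    *)
(* Free-group elements are words (free reduction is built into the         *)
(* congruence below, rule pc_free). Rack elements s^w are pairs (s, w).    *)

Definition letter (N : nat) := (option 'I_N * bool)%type.
Definition word (N : nat) := seq (letter N).
Definition elt (N : nat) := ('I_N * word N)%type.

Definition linv N (l : letter N) : letter N := (l.1, ~~ l.2).
Definition winv N (w : word N) : word N := rev (map (@linv N) w).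

Definition gen N (i : 'I_N) : elt N := (i, [::]).

Definition act N (x : elt N) (g : word N) : elt N := (x.1, x.2 ++ g).

(* s^w |> c^z = s^{w z^-1 c z}  and  s^w |>bar c^z = s^{w z^-1 c^-1 z} *)
Definition rop N (x y : elt N) : elt N :=
  (x.1, x.2 ++ winv y.2 ++ (Some y.1, true) :: y.2).
Definition ropi N (x y : elt N) : elt N :=
  (x.1, x.2 ++ winv y.2 ++ (Some y.1, false) :: y.2).
Definition rop_e N (e : bool) (x y : elt N) : elt N :=
  if e then rop x y else ropi x y.

(* Smallest congruence on FR(S_P,S_O) (compatible with |>, |>bar and with  *)
(* the operator-group action) identifying the primary relations x ~ y and  *)
(* z^u ~ z^v for the operator relations u == v.                            *)
Inductive pcong N (prim : elt N -> elt N -> Prop)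
    (oprel : word N -> word N -> Prop) : elt N -> elt N -> Prop :=
| pc_refl x : pcong prim oprel x x
| pc_sym x y : pcong prim oprel x y -> pcong prim oprel y x
| pc_trans x y z : pcong prim oprel x y -> pcong prim oprel y z ->
    pcong prim oprel x z
| pc_free s u l v :
    pcong prim oprel (s, u ++ l :: linv l :: v) (s, u ++ v)
| pc_act x y g : pcong prim oprel x y ->
    pcong prim oprel (act x g) (act y g)
| pc_rop x x' y y' : pcong prim oprel x x' -> pcong prim oprel y y' ->
    pcong prim oprel (rop x y) (rop x' y')
| pc_ropi x x' y y' : pcong prim oprel x x' -> pcong prim oprel y y' ->
    pcong prim oprel (ropi x y) (ropi x' y')
| pc_prim x y : prim x y -> pcong prim oprel x y
| pc_op s w u v : oprel u v -> pcong prim oprel (s, w ++ u) (s, w ++ v).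

(* The presentation of R(D).  Arcs x_1..x_{m+d}; cr lists the crossing     *)
(* relations as triples ((i, j), l) meaning x_i |> x_j = x_l; eps k is     *)
(* epsilon_{k+1} (true = +1, false = -1).                                  *)

Definition xlow m d (k : 'I_d) : 'I_(m + d) := widen_ord (leq_addl m d) k.
Definition xhigh m d (k : 'I_d) : 'I_(m + d) := rshift m k.

Definition aletter N : letter N := (None, true).

Definition RD_prim m d (cr : seq ('I_(m + d) * 'I_(m + d) * 'I_(m + d)))
    (x y : elt (m + d)) : Prop :=
  (exists2 t, t \in cr /\ x = rop (gen t.1.1) (gen t.1.2) & y = gen t.2)
  \/ (exists k : 'I_d, x = act (gen (xlow m k)) [:: aletter _]
                       /\ y = gen (xhigh m k)).

Definition Wd m d (eps : 'I_d -> bool) : word (m + d) :=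
  [seq (Some (xlow m k), eps k) | k <- rev (enum 'I_d)].

Definition RD_op p m d (eps : 'I_d -> bool) (u v : word (m + d)) : Prop :=
  u = nseq p (aletter _) /\ v = Wd m eps.

Definition RD_rel p m d cr (eps : 'I_d -> bool) : elt (m + d) -> elt (m + d) -> Prop :=
  pcong (@RD_prim m d cr) (@RD_op p m d eps).

Definition Amap m d (x : elt (m + d)) : elt (m + d) := act x [:: aletter _].

Definition Fmap m d (eps : 'I_d -> bool) (x : elt (m + d)) : elt (m + d) :=
  foldl (fun y k => rop_e (eps k) y (gen (xlow m k))) x (rev (enum 'I_d)).

(* f induces a rack automorphism of the quotient FR / R : well defined,    *)
(* bijective on classes, and f(x |> y) = f(x) |> f(y).                     *)
Definition rack_aut N (R : elt N -> elt N -> Prop) (f : elt N -> elt N) : Prop :=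
  [/\ forall x y, R x y -> R (f x) (f y),
      forall x y, R (f x) (f y) -> R x y,
      forall y, exists x, R (f x) y
    & forall x y, R (f (rop x y)) (rop (f x) (f y))].

(* Both maps are right actions of the operator group on the extended free
   rack: A is the action of a, and F is the action of the single word
   W = x_d^{eps_d} ... x_1^{eps_1}.  Acting by any word g is a rack
   automorphism, because s^w |> c^z = s^{w z^-1 c z} gives
   (x |> y)^g = x^g |> y^g after the free cancellation g g^-1 = 1, and
   acting by g^-1 inverts it.  Finally A^p is the action of a^p, which the
   operator relation a^p == W identifies with the action of W, i.e. with F. *)

From mathcomp Require Import all_boot.

Set Implicit Arguments.
Unset Strict Implicit.
Unset Printing Implicit Defensive.

Section Words.
Variable N : nat.

Lemma winv_cons (l : letter N) (g : word N) : winv (l :: g) = winv g ++ [:: linv l].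
Proof. by rewrite /winv /= rev_cons cats1. Qed.

Lemma winv_cat (g h : word N) : winv (g ++ h) = winv h ++ winv g.
Proof. by rewrite /winv map_cat rev_cat. Qed.

Lemma winvK : involutive (@winv N).
Proof.
move=> g; rewrite /winv map_rev revK -map_comp map_id_in //.
by move=> [a b] _; rewrite /linv /= negbK.
Qed.

Lemma act0 (x : elt N) : act x [::] = x.
Proof. by case: x => s w; rewrite /act cats0. Qed.

Lemma actA (x : elt N) (g h : word N) : act (act x g) h = act x (g ++ h).
Proof. by rewrite /act catA. Qed.

Lemma iter_act_letter n (l : letter N) (x : elt N) :
  iter n (fun y => act y [:: l]) x = act x (nseq n l).
Proof.
elim: n => [|n IHn]; first by rewrite act0.
by rewrite iterS IHn actA -addn1 nseqD.
Qed.

End Words.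

Section ActionAutomorphism.
Variables (N : nat) (prim : elt N -> elt N -> Prop) (oprel : word N -> word N -> Prop).
Local Notation R := (pcong prim oprel).

Lemma pcong_cancel_winv s u (g : word N) v : R (s, u ++ g ++ winv g ++ v) (s, u ++ v).
Proof.
elim: g u v => [|l g IHg] u v /=; first exact: pc_refl.
rewrite winv_cons -catA /=.
apply: pc_trans (pc_free _ _ s u l v).
by have := IHg (rcons u l) (linv l :: v); rewrite -cats1 -!catA.
Qed.

Lemma pcong_act_winv (x : elt N) (g : word N) : R (act (act x g) (winv g)) x.
Proof.
case: x => s w; rewrite actA /act.
by have := pcong_cancel_winv s w g [::]; rewrite !cats0.
Qed.

Lemma pcong_act_rop (x y : elt N) (g : word N) :
  R (act (rop x y) g) (rop (act x g) (act y g)).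
Proof.
case: x y => [s1 w1] [s2 w2]; rewrite /rop /act /= winv_cat -!catA.
exact/pc_sym/pcong_cancel_winv.
Qed.

Lemma pcong_act_oprel (x : elt N) (u v : word N) : oprel u v -> R (act x u) (act x v).
Proof. by case: x => s w; apply: pc_op. Qed.

Lemma rack_aut_act (g : word N) : rack_aut R (fun x => act x g).
Proof.
split=> [x y Rxy | x y Rxy | y | x y].
- exact: pc_act.
- apply: pc_trans (pc_sym (pcong_act_winv x g)) _.
  exact: pc_trans (pc_act (winv g) Rxy) (pcong_act_winv y g).
- by exists (act y (winv g)); have := pcong_act_winv y (winv g); rewrite winvK.
- exact: pcong_act_rop.
Qed.

Lemma rack_aut_eqfun (f h : elt N -> elt N) : f =1 h -> rack_aut R f -> rack_aut R h.
Proof.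
move=> efh [Rf Rf' Rsurj Rrop]; split=> [x y | x y | y | x y].
- by rewrite -!efh; apply: Rf.
- by rewrite -!efh; apply: Rf'.
- by have [x Rx] := Rsurj y; exists x; rewrite -efh.
- by rewrite -!efh; apply: Rrop.
Qed.

End ActionAutomorphism.

Lemma Fmap_act m d (eps : 'I_d -> bool) : Fmap eps =1 (fun x => act x (Wd m eps)).
Proof.
rewrite /Fmap /Wd => x; elim: (rev (enum 'I_d)) x => [|k s IHs] x /=.
  by rewrite act0.
by rewrite IHs; case: (eps k); rewrite /rop_e /rop /ropi /act /= -catA.
Qed.

Theorem lemma2 (p m d : nat) (hp : 0 < p)
    (cr : seq ('I_(m + d) * 'I_(m + d) * 'I_(m + d))) (eps : 'I_d -> bool) :
  rack_aut (RD_rel p cr eps) (@Amap m d)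
  /\ rack_aut (RD_rel p cr eps) (Fmap eps)
  /\ (forall x, RD_rel p cr eps (iter p (@Amap m d) x) (Fmap eps x)).
Proof.
split; first exact: rack_aut_act.
split.
  apply: rack_aut_eqfun (rack_aut_act _ _ (Wd m eps)) => x.
  by rewrite Fmap_act.
move=> x; rewrite Fmap_act iter_act_letter.
exact: pcong_act_oprel.
Qed.
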